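(* Let $\mu$ be the Cauchy distribution $d\mu(x)=\frac1\pi\frac{dx}{1+x^2}$, $\alpha\ge0$, $\beta>0$, $s=\alpha+\beta$. For $u_0\in\mathbb R$ let $u=f_{\alpha,\beta}(u_0)$ and $v=v_s(u_0)$. Then \[\frac{du}{du_0}=\frac{(1+v)(s^2+4\alpha v^2(1+v))-(\alpha-\beta)sv}{s(1+v)(s+2v^2(1+v))}.\]
   Context: $v_s(u)=\inf\{v>0:\int\frac{d\mu(x)}{(u-x)^2+v^2}\le\frac1s\}$; $f_{\alpha,\beta}(u_0)=\mathrm{Re}[H_{\alpha-\beta}(u_0+iv_s(u_0))]=u_0+(\alpha-\beta)\int\frac{(u_0-x)\,d\mu(x)}{(u_0-x)^2+v_s(u_0)^2}$, where $H_r(z)=z+r\int\frac{d\mu(x)}{z-x}$. *)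

From Stdlib Require Import Reals.
From Coquelicot Require Import Coquelicot.
Open Scope R_scope.

Definition cauchy_int (g : R -> R) : R :=
  RInt_gen (fun x => g x / (PI * (1 + x ^ 2)))
           (Rbar_locally m_infty) (Rbar_locally p_infty).

Definition v_s (s u : R) : R :=
  real (Glb_Rbar (fun v => 0 < v /\
          cauchy_int (fun x => 1 / ((u - x) ^ 2 + v ^ 2)) <= 1 / s)).

Definition f_ab (alpha beta u0 : R) : R :=
  let v := v_s (alpha + beta) u0 in
  u0 + (alpha - beta) * cauchy_int (fun x => (u0 - x) / ((u0 - x) ^ 2 + v ^ 2)).

(* The Cauchy transform of mu is 1/(z + i), so for v > 0 the two integrals entering v_s and
   f_ab are rational:
     int dmu(x) / ((u-x)^2 + v^2)       = (v + 1) / (v (u^2 + (v+1)^2)),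
     int (u-x) dmu(x) / ((u-x)^2 + v^2) = u / (u^2 + (v+1)^2)
   (by partial fractions and explicit primitives).  Hence v = v_s(u) is the
   unique positive root of the cubic v (u^2 + (v+1)^2) = s (v+1), and
   f_ab(u) = u + (alpha - beta)/s * u v/(v+1).  Subtracting the cubic at two points gives
   v(y) - v(u) = (y - u) q(y) with q continuous, so v' = -2 u v^2 / (s + 2 v^2 (v+1));
   differentiating the closed form of f_ab and eliminating u^2 with the cubic gives the
   formula. *)

From Stdlib Require Import Reals Lra.
From Coquelicot Require Import Coquelicot.
Open Scope R_scope.

Lemma sum_sq_pos (t v : R) : 0 < v -> 0 < t ^ 2 + v ^ 2.
Proof. intros Hv. pose proof (pow2_ge_0 t). pose proof (pow_lt v 2 Hv). lra. Qed.

Lemma one_plus_sq_pos (x : R) : 0 < 1 + x ^ 2.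
Proof. pose proof (pow2_ge_0 x). lra. Qed.

Lemma is_RInt_gen_primitive (f F : R -> R) (Lm Lp : R) :
  (forall x, is_derive F x (f x)) -> (forall x, continuous f x) ->
  filterlim F (Rbar_locally m_infty) (locally Lm) ->
  filterlim F (Rbar_locally p_infty) (locally Lp) ->
  is_RInt_gen f (Rbar_locally m_infty) (Rbar_locally p_infty) (Lp - Lm).
Proof.
  intros HF Hf Hm Hp.
  assert (DF : forall x, Derive F x = f x) by (intros x; apply is_derive_unique, HF).
  apply is_RInt_gen_ext with (f := Derive F).
  - apply filter_forall. intros ab x _. apply DF.
  - apply is_RInt_gen_Derive; auto; apply filter_forall; intros ab x _.
    + eexists. apply HF.
    + apply continuous_ext with (f := f); [intros y; symmetry; apply DF | apply Hf].
Qed.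

Lemma cauchy_int_primitive (g F : R -> R) (Lm Lp : R) :
  (forall x, is_derive F x (g x / (PI * (1 + x ^ 2)))) ->
  (forall x, continuous (fun y => g y / (PI * (1 + y ^ 2))) x) ->
  filterlim F (Rbar_locally m_infty) (locally Lm) ->
  filterlim F (Rbar_locally p_infty) (locally Lp) ->
  cauchy_int g = Lp - Lm.
Proof.
  intros. apply is_RInt_gen_unique. apply is_RInt_gen_primitive with F; auto.
Qed.

Lemma filterlim_p_infty_inv (F G : R -> R) (M : R) :
  (forall x, M < x -> F x = G (/ x)) -> continuous G 0 ->
  filterlim F (Rbar_locally p_infty) (locally (G 0)).
Proof.
  intros HFG HG. apply filterlim_ext_loc with (fun x => G (/ x)).
  - exists M. intros x Hx. symmetry. auto.
  - eapply filterlim_comp; [|exact HG].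
    exact (is_lim_inv _ _ _ (is_lim_id p_infty) ltac:(discriminate)).
Qed.

Lemma filterlim_m_infty_inv (F G : R -> R) (M : R) :
  (forall x, x < M -> F x = G (/ x)) -> continuous G 0 ->
  filterlim F (Rbar_locally m_infty) (locally (G 0)).
Proof.
  intros HFG HG. apply filterlim_ext_loc with (fun x => G (/ x)).
  - exists M. intros x Hx. symmetry. auto.
  - eapply filterlim_comp; [|exact HG].
    exact (is_lim_inv _ _ _ (is_lim_id m_infty) ltac:(discriminate)).
Qed.

Lemma atan_inv_neg (x : R) : x < 0 -> atan (/ x) = - (PI / 2) - atan x.
Proof.
  intros Hx. replace (/ x) with (- / (- x)) by (field; lra).
  rewrite atan_opp, atan_inv, atan_opp by lra. ring.
Qed.

Lemma cauchy_int_partial_fractions (g : R -> R) (u v a b c : R) : 0 < v ->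
  (forall x, g x = a * x + b + (c * v - a * (x - u)) * (1 + x ^ 2) / ((x - u) ^ 2 + v ^ 2)) ->
  cauchy_int g = b + c.
Proof.
  intros Hv Hg. pose proof PI_RGT_0 as Hpi.
  (* For large positive (sg = 1) and large negative (sg = -1) x the primitive F below equals
     Psi sg (/ x), and Psi sg is smooth at 0: this gives the limits of F at +oo and -oo. *)
  set (Psi := fun (sg y : R) =>
    (a / 2 * ln ((1 + y ^ 2) / ((1 - u * y) ^ 2 + v ^ 2 * y ^ 2))
     + (b + c) * sg * (PI / 2) - b * atan y - c * atan (v * y / (1 - u * y))) / PI).
  assert (HPsi : forall sg, continuous (Psi sg) 0).
  { intros sg. apply (@ex_derive_continuous R_AbsRing R_NormedModule).
    unfold Psi. auto_derive.
    rewrite ?Rmult_0_l, ?Rmult_0_r, ?Ropp_0, ?Rplus_0_r, ?Rmult_1_r, ?Rinv_1.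
    repeat split; lra. }
  assert (Hsubst : forall x, x <> 0 -> x <> u ->
    (1 + (/ x) ^ 2) / ((1 - u * / x) ^ 2 + v ^ 2 * (/ x) ^ 2) = (1 + x ^ 2) / ((x - u) ^ 2 + v ^ 2)
    /\ v * / x / (1 - u * / x) = / ((x - u) / v)).
  { intros x Hx Hxu. pose proof (sum_sq_pos (x - u) v Hv).
    split; field; repeat split; lra. }
  replace (b + c) with (Psi 1 0 - Psi (-1) 0).
  2:{ unfold Psi. rewrite Rmult_0_r, Rmult_0_r, Rminus_0_r, Rdiv_0_l, atan_0.
      replace ((1 + 0 ^ 2) / (1 ^ 2 + v ^ 2 * 0 ^ 2)) with 1 by field.
      rewrite ln_1. field. lra. }
  apply cauchy_int_primitive with
    (F := fun x => (a / 2 * ln ((1 + x ^ 2) / ((x - u) ^ 2 + v ^ 2)) + b * atan x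
                    + c * atan ((x - u) / v)) / PI).
  - intros x. pose proof (sum_sq_pos (x - u) v Hv). pose proof (one_plus_sq_pos x).
    assert (E : (x + - u) * ((x + - u) * 1) + v * (v * 1) = (x - u) ^ 2 + v ^ 2) by ring.
    rewrite Hg. auto_derive; rewrite E, ?Rmult_1_r.
    + repeat split; try lra. apply Rdiv_lt_0_compat; lra.
    + field. lra.
  - intros x. pose proof (sum_sq_pos (x - u) v Hv). pose proof (one_plus_sq_pos x).
    apply continuous_ext with (f := fun y =>
      (a * y + b + (c * v - a * (y - u)) * (1 + y ^ 2) / ((y - u) ^ 2 + v ^ 2)) / (PI * (1 + y ^ 2))).
    { intros y. rewrite Hg. reflexivity. }
    assert (0 < PI * (1 + x ^ 2)) by (apply Rmult_lt_0_compat; lra).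
    apply (@ex_derive_continuous R_AbsRing R_NormedModule). auto_derive.
    replace ((x + - u) * ((x + - u) * 1) + v * (v * 1)) with ((x - u) ^ 2 + v ^ 2) by ring.
    replace (1 + x * (x * 1)) with (1 + x ^ 2) by ring.
    repeat split; lra.
  - apply filterlim_m_infty_inv with (M := Rmin 0 u).
    + intros x Hx. pose proof (Rmin_l 0 u). pose proof (Rmin_r 0 u).
      destruct (Hsubst x) as [E1 E2]; try lra. unfold Psi. rewrite E1, E2.
      rewrite !atan_inv_neg by (try apply Rdiv_neg_pos; lra). field. lra.
    + apply HPsi.
  - apply filterlim_p_infty_inv with (M := Rmax 0 u).
    + intros x Hx. pose proof (Rmax_l 0 u). pose proof (Rmax_r 0 u).
      destruct (Hsubst x) as [E1 E2]; try lra. unfold Psi. rewrite E1, E2.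
      rewrite !atan_inv by (try apply Rdiv_lt_0_compat; lra). field. lra.
    + apply HPsi.
Qed.

Lemma cauchy_int_double_pole (g : R -> R) (a b : R) :
  (forall x, g x = (a * x + b) / (1 + x ^ 2)) -> cauchy_int g = b / 2.
Proof.
  intros Hg. pose proof PI_RGT_0 as Hpi.
  set (Psi := fun (sg y : R) =>
    (b * (y / (y ^ 2 + 1) + sg * (PI / 2) - atan y) - a * (y ^ 2 / (y ^ 2 + 1))) / (2 * PI)).
  assert (HPsi : forall sg, continuous (Psi sg) 0).
  { intros sg. apply (@ex_derive_continuous R_AbsRing R_NormedModule).
    unfold Psi. auto_derive. rewrite Rmult_0_l, Rplus_0_l. repeat split; lra. }
  replace (b / 2) with (Psi 1 0 - Psi (-1) 0).
  2:{ unfold Psi. rewrite atan_0. field. lra. }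
  apply cauchy_int_primitive with
    (F := fun x => (b * (x / (1 + x ^ 2) + atan x) - a / (1 + x ^ 2)) / (2 * PI)).
  - intros x. pose proof (one_plus_sq_pos x).
    rewrite Hg. auto_derive; replace (1 + x * (x * 1)) with (1 + x ^ 2) by ring.
    + repeat split; lra.
    + field. lra.
  - intros x. pose proof (one_plus_sq_pos x).
    assert (0 < PI * (1 + x ^ 2)) by (apply Rmult_lt_0_compat; lra).
    apply continuous_ext with (f := fun y => (a * y + b) / (1 + y ^ 2) / (PI * (1 + y ^ 2))).
    { intros y. rewrite Hg. reflexivity. }
    apply (@ex_derive_continuous R_AbsRing R_NormedModule). auto_derive.
    replace (1 + x * (x * 1)) with (1 + x ^ 2) by ring. repeat split; lra.
  - apply filterlim_m_infty_inv with (M := 0).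
    + intros x Hx. pose proof (one_plus_sq_pos x). unfold Psi.
      rewrite atan_inv_neg by lra. field. lra.
    + apply HPsi.
  - apply filterlim_p_infty_inv with (M := 0).
    + intros x Hx. pose proof (one_plus_sq_pos x). unfold Psi.
      rewrite atan_inv by lra. field. lra.
    + apply HPsi.
Qed.

Lemma sum_sq_zero_or_pos (x y : R) : (x = 0 /\ y = 0) \/ 0 < x ^ 2 + y ^ 2.
Proof.
  pose proof (pow2_ge_0 x). pose proof (pow2_ge_0 y).
  destruct (Req_dec x 0) as [Hx|Hx]; [destruct (Req_dec y 0) as [Hy|Hy]|].
  - left. auto.
  - right. pose proof (Rsqr_pos_lt y Hy). rewrite Rsqr_pow2 in *. lra.
  - right. pose proof (Rsqr_pos_lt x Hx). rewrite Rsqr_pow2 in *. lra.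
Qed.

Lemma cauchy_int_rational (g : R -> R) (u v A B : R) : 0 < v ->
  (forall x, g x = (A + B * (u - x)) / ((u - x) ^ 2 + v ^ 2)) ->
  cauchy_int g = (A * (v + 1) / v + B * u) / (u ^ 2 + (v + 1) ^ 2).
Proof.
  intros Hv Hg. pose proof (sum_sq_pos u (v + 1) ltac:(lra)) as Hp.
  (* At (u, v) = (0, 1) the quadratics (x - u)^2 + v^2 and 1 + x^2 coincide; elsewhere
     their resultant D is nonzero and partial fractions apply. *)
  destruct (sum_sq_zero_or_pos u (v - 1)) as [[Hu Hv1]|Hm].
  - replace v with 1 in * by lra. subst u.
    rewrite (cauchy_int_double_pole g (- B) A).
    + field.
    + intros x. pose proof (one_plus_sq_pos x). rewrite Hg. field. lra.
  - set (D := (u ^ 2 + (v + 1) ^ 2) * (u ^ 2 + (v - 1) ^ 2)).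
    assert (HD : 0 < D) by (apply Rmult_lt_0_compat; assumption).
    rewrite (cauchy_int_partial_fractions g u v
      ((2 * u * A + (u ^ 2 - v ^ 2 + 1) * B) / D)
      (((u ^ 2 + v ^ 2 - 1) * A + u * (u ^ 2 + v ^ 2 + 1) * B) / D)
      (((u ^ 2 - v ^ 2 + 1) * A / v - 2 * u * v * B) / D) Hv).
    + unfold D. field. lra.
    + intros x. pose proof (sum_sq_pos (x - u) v Hv). rewrite Hg.
      replace ((u - x) ^ 2) with ((x - u) ^ 2) by ring.
      unfold D in *. field. lra.
Qed.

Definition v_s_cubic (s u v : R) : R := v * (u ^ 2 + (v + 1) ^ 2) - s * (v + 1).

Lemma v_s_cubic_cross (s u1 u2 a b : R) :
  b * v_s_cubic s u1 a - a * v_s_cubic s u2 b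
  = (a - b) * (a * b * (a + b + 2) + s) + a * b * (u1 ^ 2 - u2 ^ 2).
Proof. unfold v_s_cubic. ring. Qed.

Lemma div_nonneg_iff (a c : R) : 0 < c -> 0 <= a / c <-> 0 <= a.
Proof.
  intros Hc. split; intros Ha.
  - replace a with (a / c * c) by (field; lra). nra.
  - apply Rmult_le_pos; [exact Ha | apply Rlt_le, Rinv_0_lt_compat, Hc].
Qed.

Lemma cauchy_int_Poisson_le_iff (s u v : R) : 0 < s -> 0 < v ->
  cauchy_int (fun x => 1 / ((u - x) ^ 2 + v ^ 2)) <= 1 / s <-> 0 <= v_s_cubic s u v.
Proof.
  intros Hs Hv. pose proof (sum_sq_pos u (v + 1) ltac:(lra)) as Hp.
  rewrite (cauchy_int_rational _ u v 1 0 Hv); [|intros x; rewrite Rmult_0_l, Rplus_0_r; reflexivity].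
  assert (E : 1 / s - (1 * (v + 1) / v + 0 * u) / (u ^ 2 + (v + 1) ^ 2)
              = v_s_cubic s u v / (s * v * (u ^ 2 + (v + 1) ^ 2)))
    by (unfold v_s_cubic; field; lra).
  rewrite <- div_nonneg_iff with (c := s * v * (u ^ 2 + (v + 1) ^ 2)), <- E
    by (apply Rmult_lt_0_compat; [apply Rmult_lt_0_compat|]; lra).
  lra.
Qed.

Lemma v_s_cubic_root_exists (s u : R) : 0 < s -> exists z, 0 < z /\ v_s_cubic s u z = 0.
Proof.
  intros Hs.
  assert (HP : continuity (v_s_cubic s u)).
  { intros x. apply continuity_pt_filterlim.
    apply (@ex_derive_continuous R_AbsRing R_NormedModule).
    unfold v_s_cubic. auto_derive. exact I. }
  assert (H0 : v_s_cubic s u 0 < 0) by (unfold v_s_cubic; lra).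
  assert (H1 : 0 < v_s_cubic s u (s + 1)) by (unfold v_s_cubic; pose proof (pow2_ge_0 u); nra).
  destruct (IVT _ 0 (s + 1) HP ltac:(lra) H0 H1) as [z [[Hz0 _] Hz]].
  exists z. split; [destruct Hz0 as [|<-]; [assumption | lra] | exact Hz].
Qed.

Lemma v_s_cubic_nonneg_iff (s u z v : R) : 0 < s -> 0 < z -> v_s_cubic s u z = 0 -> 0 < v ->
  0 <= v_s_cubic s u v <-> z <= v.
Proof.
  intros Hs Hz Pz Hv.
  pose proof (v_s_cubic_cross s u u v z) as E. rewrite Pz in E.
  assert (0 < v * z * (v + z + 2) + s) by (assert (0 < v * z) by nra; nra).
  split; intros Hle; nra.
Qed.

Lemma v_s_spec (s u : R) : 0 < s -> 0 < v_s s u /\ v_s_cubic s u (v_s s u) = 0.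
Proof.
  intros Hs. destruct (v_s_cubic_root_exists s u Hs) as [z [Hz Pz]].
  enough (v_s s u = z) as -> by auto.
  unfold v_s. rewrite (Glb_Rbar_eqset _ (fun v => z <= v)).
  - rewrite (is_glb_Rbar_unique _ z); [reflexivity|].
    split; [intros v Hv; exact Hv | intros b Hb; apply Hb; simpl; lra].
  - intros v. split.
    + intros [Hv Hle]. apply (v_s_cubic_nonneg_iff s u z v); auto.
      apply cauchy_int_Poisson_le_iff; auto.
    + intros Hv. split; [lra|]. apply cauchy_int_Poisson_le_iff; try lra.
      apply (v_s_cubic_nonneg_iff s u z v); auto; lra.
Qed.

Lemma is_derive_of_factorization (f q : R -> R) (x : R) :
  (forall y, f y - f x = (y - x) * q y) -> continuous q x -> is_derive f x (q x).
Proof.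
  intros Hf Hq. apply is_derive_Reals. apply continuity_pt_filterlim in Hq.
  intros eps Heps. destruct (Hq eps Heps) as [d [Hd Hqd]].
  exists (mkposreal d Hd). intros h Hh0 Hh. simpl in Hh.
  replace ((f (x + h) - f x) / h) with (q (x + h)) by (rewrite Hf; field; exact Hh0).
  apply Hqd. split.
  - split; [exact I | lra].
  - simpl. unfold R_dist. replace (x + h - x) with h by ring. exact Hh.
Qed.

Lemma continuous_of_factorization (f q : R -> R) (x C : R) :
  (forall y, f y - f x = (y - x) * q y) ->
  (forall y, Rabs (y - x) < 1 -> Rabs (q y) <= C) -> continuous f x.
Proof.
  intros Hf Hq. apply continuity_pt_filterlim. intros eps Heps.
  assert (HC : 0 <= C).
  { eapply Rle_trans; [apply Rabs_pos | apply (Hq x)]. rewrite Rminus_diag, Rabs_R0. lra. }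
  assert (He : 0 < eps / (C + 1)) by (apply Rdiv_lt_0_compat; lra).
  exists (Rmin 1 (eps / (C + 1))). split; [apply Rmin_glb_lt; lra|].
  intros y [_ Hy]. simpl in *. unfold R_dist in *.
  pose proof (Rmin_l 1 (eps / (C + 1))). pose proof (Rmin_r 1 (eps / (C + 1))).
  rewrite Hf, Rabs_mult.
  assert (Hqy : Rabs (q y) <= C) by (apply Hq; lra).
  apply Rle_lt_trans with (Rabs (y - x) * (C + 1)).
  - apply Rmult_le_compat_l; [apply Rabs_pos | lra].
  - replace eps with (eps / (C + 1) * (C + 1)) by (field; lra).
    apply Rmult_lt_compat_r; lra.
Qed.

Definition v_s_weight (s a b : R) : R := a * b / (a * b * (a + b + 2) + s).

Lemma v_s_weight_bounds (s a b : R) : 0 < s -> 0 < a -> 0 < b ->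
  0 <= v_s_weight s a b <= / 2.
Proof.
  intros Hs Ha Hb. unfold v_s_weight.
  assert (0 < a * b) by nra.
  assert (HK : 0 < a * b * (a + b + 2) + s) by nra.
  split.
  - apply Rlt_le, Rdiv_lt_0_compat; lra.
  - apply Rmult_le_reg_r with (a * b * (a + b + 2) + s); [exact HK|].
    replace (a * b / (a * b * (a + b + 2) + s) * (a * b * (a + b + 2) + s)) with (a * b)
      by (field; lra).
    nra.
Qed.

Lemma v_s_factorization (s u y : R) : 0 < s ->
  v_s s y - v_s s u = (y - u) * (- (y + u) * v_s_weight s (v_s s y) (v_s s u)).
Proof.
  intros Hs. destruct (v_s_spec s y Hs) as [Ha Pa]. destruct (v_s_spec s u Hs) as [Hb Pb].
  pose proof (v_s_cubic_cross s y u (v_s s y) (v_s s u)) as E.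
  unfold v_s_weight. set (a := v_s s y) in *. set (b := v_s s u) in *.
  rewrite Pa, Pb in E.
  set (K := a * b * (a + b + 2) + s) in *.
  assert (HK : 0 < K) by (unfold K; assert (0 < a * b) by nra; nra).
  assert (Hkey : (a - b) * K = - (y ^ 2 - u ^ 2) * (a * b)) by lra.
  apply Rmult_eq_reg_r with K; [|lra].
  rewrite Hkey. field. lra.
Qed.

Lemma continuous_v_s (s u : R) : 0 < s -> continuous (v_s s) u.
Proof.
  intros Hs.
  apply continuous_of_factorization with
    (q := fun y => - (y + u) * v_s_weight s (v_s s y) (v_s s u)) (C := Rabs u + 1).
  - intros y. apply v_s_factorization, Hs.
  - intros y Hy.
    destruct (v_s_weight_bounds s (v_s s y) (v_s s u)) as [Hw0 Hw1];
      try apply v_s_spec; try exact Hs.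
    rewrite Rabs_mult, Rabs_Ropp, (Rabs_pos_eq (v_s_weight _ _ _)) by exact Hw0.
    assert (Hyu : Rabs (y + u) <= 2 * Rabs u + 1).
    { replace (y + u) with ((y - u) + 2 * u) by ring.
      eapply Rle_trans; [apply Rabs_triang|].
      rewrite Rabs_mult, (Rabs_pos_eq 2) by lra. lra. }
    pose proof (Rabs_pos (y + u)). pose proof (Rabs_pos u).
    apply Rle_trans with (Rabs (y + u) * / 2); [apply Rmult_le_compat_l|]; lra.
Qed.

Lemma is_derive_v_s (s u : R) : 0 < s ->
  is_derive (v_s s) u (- (2 * u * v_s s u ^ 2) / (s + 2 * v_s s u ^ 2 * (v_s s u + 1))).
Proof.
  intros Hs. destruct (v_s_spec s u Hs) as [Hb _].
  set (q := fun y => - (y + u) * v_s_weight s (v_s s y) (v_s s u)).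
  replace (- (2 * u * v_s s u ^ 2) / (s + 2 * v_s s u ^ 2 * (v_s s u + 1))) with (q u).
  2:{ unfold q, v_s_weight. pose proof (pow_lt _ 2 Hb). field. nra. }
  apply is_derive_of_factorization.
  - intros y. apply v_s_factorization, Hs.
  - apply (@continuous_mult R_UniformSpace R_AbsRing (fun y => - (y + u))
             (fun y => v_s_weight s (v_s s y) (v_s s u))).
    + apply (@ex_derive_continuous R_AbsRing R_NormedModule). auto_derive. exact I.
    + apply continuous_comp with (g := fun a => v_s_weight s a (v_s s u));
        [apply continuous_v_s, Hs|].
      apply (@ex_derive_continuous R_AbsRing R_NormedModule). unfold v_s_weight.
      auto_derive. nra.
Qed.

Lemma f_ab_closed_form (alpha beta u : R) : 0 < alpha + beta ->
  f_ab alpha beta u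
  = u + (alpha - beta) / (alpha + beta)
        * (u * (v_s (alpha + beta) u / (v_s (alpha + beta) u + 1))).
Proof.
  intros Hs. unfold f_ab. set (s := alpha + beta) in *. set (v := v_s s u).
  destruct (v_s_spec s u Hs) as [Hv Pv]. fold v in Hv, Pv. unfold v_s_cubic in Pv.
  pose proof (sum_sq_pos u (v + 1) ltac:(lra)) as Hp.
  rewrite (cauchy_int_rational _ u v 0 1 Hv); [|intros x; rewrite Rplus_0_l, Rmult_1_l; reflexivity].
  replace (u ^ 2 + (v + 1) ^ 2) with (s * (v + 1) / v).
  - field. lra.
  - apply Rmult_eq_reg_l with v; [|lra].
    replace (v * (s * (v + 1) / v)) with (s * (v + 1)) by (field; lra). lra.
Qed.

Lemma is_derive_plus_scaled_ratio (w : R -> R) (k u w' : R) :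
  is_derive w u w' -> w u + 1 <> 0 ->
  is_derive (fun t => t + k * (t * (w t / (w t + 1)))) u
    (1 + k * (w u / (w u + 1) + u * (w' / (w u + 1) ^ 2))).
Proof.
  intros Hw Hw1.
  assert (Dw : Derive (fun t => w t) u = w') by (apply is_derive_unique, Hw).
  auto_derive.
  - repeat split; try (eexists; exact Hw). exact Hw1.
  - rewrite Dw. field. exact Hw1.
Qed.

Lemma f_ab_derivative_value (alpha beta u v : R) :
  0 < alpha + beta -> 0 < v -> v_s_cubic (alpha + beta) u v = 0 ->
  1 + (alpha - beta) / (alpha + beta)
      * (v / (v + 1) + u * (- (2 * u * v ^ 2) / (alpha + beta + 2 * v ^ 2 * (v + 1)) / (v + 1) ^ 2))
  = ((1 + v) * ((alpha + beta) ^ 2 + 4 * alpha * v ^ 2 * (1 + v)) - (alpha - beta) * (alpha + beta) * v)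
    / ((alpha + beta) * (1 + v) * (alpha + beta + 2 * v ^ 2 * (1 + v))).
Proof.
  intros Hs Hv Pv. unfold v_s_cubic in Pv.
  assert (HD : 0 < alpha + beta + 2 * v ^ 2 * (v + 1)) by (pose proof (pow_lt v 2 Hv); nra).
  assert (Hu2 : u ^ 2 = (alpha + beta) * (v + 1) / v - (v + 1) ^ 2).
  { apply Rmult_eq_reg_l with v; [|lra].
    replace (v * ((alpha + beta) * (v + 1) / v - (v + 1) ^ 2))
      with ((alpha + beta) * (v + 1) - v * (v + 1) ^ 2) by (field; lra).
    lra. }
  replace (u * (- (2 * u * v ^ 2) / (alpha + beta + 2 * v ^ 2 * (v + 1)) / (v + 1) ^ 2))
    with (- (2 * u ^ 2 * v ^ 2) / (alpha + beta + 2 * v ^ 2 * (v + 1)) / (v + 1) ^ 2)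
    by (field; lra).
  rewrite Hu2. field. repeat split; lra.
Qed.

Theorem lemma6p7 (alpha beta u0 : R) :
  0 <= alpha -> 0 < beta ->
  let s := alpha + beta in
  let v := v_s s u0 in
  is_derive (f_ab alpha beta) u0
    (((1 + v) * (s ^ 2 + 4 * alpha * v ^ 2 * (1 + v)) - (alpha - beta) * s * v)
     / (s * (1 + v) * (s + 2 * v ^ 2 * (1 + v)))).
Proof.
  intros Ha Hb. cbv zeta.
  assert (Hs : 0 < alpha + beta) by lra.
  destruct (v_s_spec (alpha + beta) u0 Hs) as [Hv Pv].
  rewrite <- (f_ab_derivative_value alpha beta u0 _ Hs Hv Pv).
  apply is_derive_ext with (f := fun t =>
    t + (alpha - beta) / (alpha + beta) * (t * (v_s (alpha + beta) t / (v_s (alpha + beta) t + 1)))).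
  - intros t. symmetry. apply f_ab_closed_form, Hs.
  - apply is_derive_plus_scaled_ratio; [apply is_derive_v_s, Hs | lra].
Qed.
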